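(* For all $k,m\in\mathbb{N}$ with $k<m$, the metric space $([\mathbb{N}]^k,d^{(k)}_{\mathrm{I}})$ embeds isometrically into $([\mathbb{N}]^m,d^{(m)}_{\mathrm{I}})$.
   Context: For $k\in\mathbb{N}$, $[\mathbb{N}]^k$ is the set of subsets of $\mathbb{N}$ of cardinality $k$, written $\{a_1<\dots<a_k\}$. Kalton's interlacing graph on $[\mathbb{N}]^k$: $A=\{a_1<\dots<a_k\}\ne B=\{b_1<\dots<b_k\}$ are adjacent iff either $a_i\le b_i\le a_{i+1}$ for $1\le i<k$ and $a_k\le b_k$, or $b_i\le a_i\le b_{i+1}$ for $1\le i<k$ and $b_k\le a_k$. $d^{(k)}_{\mathrm{I}}$ is its shortest-path metric. *)

From mathcomp Require Import all_boot.
Set Implicit Arguments. Unset Strict Implicit. Unset Printing Implicit Defensive.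

(* [N]^k : k-element subsets of N, represented by their increasing
   enumeration a_1 < ... < a_k (0-indexed here: a_0 < ... < a_{k-1}). *)
Definition kset (k : nat) := {s : seq nat | sorted ltn s && (size s == k)}.

(* b interlaces a from above: a_i <= b_i <= a_{i+1} for i < k, and a_k <= b_k
   (1-indexed in the paper; here 0-indexed with i ranging over 0..k-2). *)
Definition interlaced (a b : seq nat) : bool :=
  all (fun i => (nth 0 a i <= nth 0 b i) && (nth 0 b i <= nth 0 a i.+1))
      (iota 0 (size a).-1)
  && (nth 0 a (size a).-1 <= nth 0 b (size a).-1).

Definition kalton_adj (k : nat) : rel (kset k) :=
  fun A B => (A != B) && (interlaced (val A) (val B) || interlaced (val B) (val A)).

Definition walk_len (k : nat) (A B : kset k) (n : nat) : Prop :=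
  exists p : seq (kset k),
    [/\ path (@kalton_adj k) A p, last A p = B & size p = n].

Definition dI (k : nat) (A B : kset k) (n : nat) : Prop :=
  walk_len A B n /\ forall n', walk_len A B n' -> n <= n'.

From mathcomp Require Import all_boot zify.
Set Implicit Arguments. Unset Strict Implicit.

(* With d = m - k, the map  pad d : {a_0<...<a_{k-1}} |->
   {0,1,...,d-1, a_0+d, ..., a_{k-1}+d}  sends k-sets to m-sets, and
   unpad d (drop the first d entries and subtract d) is a left inverse.
   Both maps are compatible with interlacing: pad d sends interlaced pairs
   to interlaced pairs, and unpad d sends interlaced pairs to interlaced
   (or equal) pairs.  Hence pad d maps walks to walks of the same length,
   while unpad d maps walks to walks that are no longer. *)

Definition pad (d : nat) (a : seq nat) : seq nat := iota 0 d ++ map (addn d) a.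
Definition unpad (d : nat) (b : seq nat) : seq nat := map (subn^~ d) (drop d b).

Lemma size_pad d a : size (pad d a) = d + size a.
Proof. by rewrite /pad size_cat size_iota size_map. Qed.

Lemma size_unpad d b : size (unpad d b) = size b - d.
Proof. by rewrite /unpad size_map size_drop. Qed.

Lemma nth_pad d a i : i < d + size a ->
  nth 0 (pad d a) i = if i < d then i else nth 0 a (i - d) + d.
Proof.
move=> lt_i; rewrite /pad nth_cat size_iota; case: ifP => lt_id.
  by rewrite nth_iota.
rewrite (nth_map 0) 1?addnC //; lia.
Qed.

Lemma nth_unpad d b j : nth 0 (unpad d b) j = nth 0 b (d + j) - d.
Proof.
rewrite /unpad; case: (ltnP j (size b - d)) => lt_j.
  by rewrite (nth_map 0) ?size_drop // nth_drop.
rewrite !nth_default ?size_map ?size_drop //; lia.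
Qed.

Lemma padK d : cancel (pad d) (unpad d).
Proof.
move=> a; rewrite /unpad /pad drop_cat size_iota ltnn subnn drop0 -map_comp.
by rewrite -[RHS]map_id; apply: eq_map => x /=; rewrite addKn.
Qed.

(* In a strictly increasing sequence of naturals, the i-th entry is >= i;
   this guarantees that unpad never truncates. *)
Lemma sorted_nth_ge (b : seq nat) i : sorted ltn b -> i < size b -> i <= nth 0 b i.
Proof.
move=> sorted_b; elim: i => [|i IH] lt_i //.
have : nth 0 b i < nth 0 b i.+1.
  by apply: (sorted_ltn_nth ltn_trans) => //; rewrite inE //; lia.
have := IH (ltnW lt_i); lia.
Qed.

Lemma pad_sorted d a : sorted ltn a -> sorted ltn (pad d a).
Proof.
rewrite /pad !(sorted_pairwise ltn_trans) pairwise_cat => sorted_a.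
apply/and3P; split.
- by apply/allrelP => x y; rewrite mem_iota => ? /mapP [z _ ->]; lia.
- by rewrite -(sorted_pairwise ltn_trans) iota_ltn_sorted.
- by rewrite pairwise_map; apply: sub_pairwise sorted_a => x y /=; lia.
Qed.

Lemma unpad_sorted d b : sorted ltn b -> sorted ltn (unpad d b).
Proof.
move=> sorted_b; rewrite /unpad sorted_map.
apply: (@sub_in_sorted _ (fun x => d <= x)); last exact: drop_sorted sorted_b.
  by move=> x y ge_x ge_y /=; rewrite /= in ge_x ge_y; lia.
apply/allP => x /(nthP 0) [i]; rewrite size_drop nth_drop => lt_i <-.
by apply: leq_trans (leq_addr i d) (sorted_nth_ge sorted_b _); rewrite -ltn_subRL.
Qed.

(* pad d preserves interlacing: the prefix 0..d-1 interlaces with itself,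
   and it fits below the shifted entries. *)
Lemma pad_interlaced d a b : size a = size b -> interlaced a b ->
  interlaced (pad d a) (pad d b).
Proof.
move=> eq_size /andP[/allP inner last_ab].
rewrite /interlaced size_pad; apply/andP; split.
  apply/allP => i; rewrite mem_iota add0n => /andP[_ lt_i].
  rewrite !nth_pad -?eq_size; try lia.
  case: (ltnP i d) => lt_id; case: (ltnP i.+1 d) => lt_Sid; try lia.
  have := inner (i - d); rewrite mem_iota add0n.
  have -> : i.+1 - d = (i - d).+1 by lia.
  by case/(_ _)/andP => [|lo hi]; [lia | rewrite !leq_add2r lo hi].
case Ea: (size a) last_ab => [|k] last_ab.
  case: d => [|d]; first by rewrite !nth_default // size_pad -?eq_size Ea.
  by rewrite addn0 !nth_pad -?eq_size ?Ea ?addn0 //= ltnSn.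
rewrite !nth_pad -?eq_size ?Ea ?ifF; try lia.
have -> : (d + k.+1).-1 - d = k by lia.
by rewrite leq_add2r.
Qed.

(* unpad d preserves interlacing, as it restricts to a final segment. *)
Lemma unpad_interlaced d b c : size b = size c -> interlaced b c ->
  interlaced (unpad d b) (unpad d c).
Proof.
move=> eq_size /andP[/allP inner last_bc].
rewrite /interlaced size_unpad; apply/andP; split.
  apply/allP => j; rewrite mem_iota add0n => /andP[_ lt_j].
  rewrite !nth_unpad; have := inner (d + j); rewrite mem_iota add0n.
  by case/(_ _)/andP => [|lo hi]; [lia | rewrite addnS !leq_sub2r].
rewrite !nth_unpad; case E: (size b - d) => [|j].
  by rewrite addn0 !nth_default // -?eq_size; lia.
have -> : d + j.+1.-1 = (size b).-1 by lia.
by rewrite leq_sub2r.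
Qed.

Lemma sorted_kset k (A : kset k) : sorted ltn (val A).
Proof. by case: A => a /= /andP[]. Qed.

Lemma size_kset k (A : kset k) : size (val A) = k.
Proof. by case: A => a /= /andP[_ /eqP]. Qed.

Section PathMetricIsometry.

Variables k m : nat.
Variables (f : kset k -> kset m) (g : kset m -> kset k).
Hypothesis fK : cancel f g.
Hypothesis f_interlaced : forall A B,
  interlaced (val A) (val B) -> interlaced (val (f A)) (val (f B)).
Hypothesis g_interlaced : forall B C,
  interlaced (val B) (val C) -> interlaced (val (g B)) (val (g C)).

(* f maps edges to edges; injectivity comes from the left inverse. *)
Lemma f_adj A B : kalton_adj A B -> kalton_adj (f A) (f B).
Proof.
case/andP => neq_AB interl; rewrite /kalton_adj (inj_eq (can_inj fK)) neq_AB.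
by case/orP: interl => /f_interlaced ->; rewrite ?orbT.
Qed.

Lemma g_adj B C : kalton_adj B C -> g B = g C \/ kalton_adj (g B) (g C).
Proof.
case/andP => _ interl; have [->|neq] := eqVneq (g B) (g C); [by left | right].
by rewrite /kalton_adj neq; case/orP: interl => /g_interlaced ->; rewrite ?orbT.
Qed.

Lemma walk_len_f A B n : walk_len A B n -> walk_len (f A) (f B) n.
Proof.
case=> p [walk_p last_p size_p]; exists (map f p); split.
- by elim: p A walk_p {last_p size_p} => //= x p IH A /andP[/f_adj -> /IH].
- by rewrite last_map last_p.
- by rewrite size_map.
Qed.

(* g maps a path to a path, skipping collapsed edges. *)
Lemma path_g (B : kset m) p : path (@kalton_adj m) B p ->
  exists q, [/\ path (@kalton_adj k) (g B) q,
                last (g B) q = g (last B p) & size q <= size p].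
Proof.
elim: p B => [|C p IH] B /=; first by exists [::].
case/andP => adj_BC /IH [q [walk_q last_q size_q]].
case: (g_adj adj_BC) => [eq_g | adj_g].
  by exists q; rewrite eq_g; split => //; apply: leqW.
by exists (g C :: q); split => //=; rewrite adj_g.
Qed.

Lemma walk_len_g A B n : walk_len (f A) (f B) n ->
  exists2 n', n' <= n & walk_len A B n'.
Proof.
case=> p [walk_p last_p <-]; have [q [walk_q last_q size_q]] := path_g walk_p.
exists (size q) => //; exists q; rewrite -[A]fK -[B]fK -last_p; split => //.
Qed.

Lemma dI_isometry A B n : dI A B n <-> dI (f A) (f B) n.
Proof.
split=> [[walk_n min_n] | [walk_n min_n]].
  split=> [|n' /walk_len_g [n'' le_n'' /min_n]]; first exact: walk_len_f.
  by move/leq_trans; apply.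
have [n' le_n' walk_n'] := walk_len_g walk_n.
have eq_n' : n' = n.
  by apply/eqP; rewrite eqn_leq le_n' min_n //; apply: walk_len_f.
by split=> [|n'' /walk_len_f /min_n]; first by rewrite -eq_n'.
Qed.

End PathMetricIsometry.

Section PadEmbedding.

Variables (k m : nat) (le_km : k <= m).

Lemma pad_kset (A : kset k) :
  sorted ltn (pad (m - k) (val A)) && (size (pad (m - k) (val A)) == m).
Proof. by rewrite pad_sorted ?sorted_kset // size_pad size_kset subnK ?eqxx. Qed.

Lemma unpad_kset (B : kset m) :
  sorted ltn (unpad (m - k) (val B)) && (size (unpad (m - k) (val B)) == k).
Proof. by rewrite unpad_sorted ?sorted_kset // size_unpad size_kset subKn ?eqxx. Qed.

Definition pad_map (A : kset k) : kset m := exist _ (pad (m - k) (val A)) (pad_kset A).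
Definition unpad_map (B : kset m) : kset k := exist _ (unpad (m - k) (val B)) (unpad_kset B).

Lemma pad_mapK : cancel pad_map unpad_map.
Proof. by move=> A; apply: val_inj; rewrite /= padK. Qed.

Lemma pad_map_interlaced A B :
  interlaced (val A) (val B) -> interlaced (val (pad_map A)) (val (pad_map B)).
Proof. by apply: pad_interlaced; rewrite !size_kset. Qed.

Lemma unpad_map_interlaced B C :
  interlaced (val B) (val C) -> interlaced (val (unpad_map B)) (val (unpad_map C)).
Proof. by apply: unpad_interlaced; rewrite !size_kset. Qed.

End PadEmbedding.

Theorem corollary5p2 (k m : nat) : k < m ->
  exists f : kset k -> kset m,
    forall (A B : kset k) (n : nat), dI A B n <-> dI (f A) (f B) n.
Proof.
move=> /ltnW le_km; exists (pad_map le_km) => A B n.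
apply: dI_isometry.
- exact: pad_mapK.
- exact: pad_map_interlaced.
- exact: unpad_map_interlaced.
Qed.
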